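(* Let $k\ge2$, $C>0$, $\lambda_1,\dots,\lambda_k\in(0,1)$ with $\sum_i\lambda_i=1$, and let $V_1,\dots,V_k$ be measurable functions on $\mathbb{R}^n$ with $e^{-V_i}$ integrable, satisfying $$\sum_{i=1}^k\lambda_iV_i(x_i)\ge C\sum_{1\le i<j\le k}\lambda_i\lambda_j\langle x_i,x_j\rangle\quad\text{for all }x_1,\dots,x_k\in\mathbb{R}^n .$$ Let $(\lambda_1U_1,\dots,\lambda_kU_k)$ be a solution to the dual multimarginal problem with marginals $\mu_i=\frac{e^{-V_i}dx_i}{\int e^{-V_i}dx_i}$ and cost $c(x_1,\dots,x_k)=C\sum_{1\le i<j\le k}\lambda_i\lambda_j\langle x_i,x_j\rangle$. Then $$\prod_{i=1}^k\Bigl(\int e^{-V_i}dx_i\Bigr)^{\lambda_i}\le\prod_{i=1}^k\Bigl(\int e^{-U_i}dx_i\Bigr)^{\lambda_i}.$$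
   Context: The multimarginal Kantorovich maximization problem with marginals $\mu_1,\dots,\mu_k$ and cost $c$ is to maximize $\int c\,dP$ over probability measures $P$ on $(\mathbb{R}^n)^k$ with marginals $\mu_1,\dots,\mu_k$. Its dual problem is to minimize $\sum_{i=1}^k\int w_i\,d\mu_i$ over tuples $(w_1,\dots,w_k)$ of functions with $\sum_{i=1}^kw_i(x_i)\ge c(x_1,\dots,x_k)$ for all $x_1,\dots,x_k$; a solution is a minimizing tuple (at which equality $\sum_iw_i(x_i)=c(x_1,\dots,x_k)$ holds almost everywhere with respect to an optimal plan $P$). *)

From HB Require Import structures.
From mathcomp Require Import all_boot all_order all_algebra.
From mathcomp Require Import all_classical all_reals all_analysis.
Set Implicit Arguments. Unset Strict Implicit. Unset Printing Implicit Defensive.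
Import Order.TTheory GRing.Theory Num.Theory.
Local Open Scope classical_set_scope.
Local Open Scope ring_scope.

(* R^n is modelled by n.-tuple R, with its product (Borel) sigma-algebra. *)
Notation Rn R n := (n.-tuple (measurableTypeR R)).

Definition dotp (R : realType) (n : nat) (x y : Rn R n) : R :=
  \sum_(l < n) tnth x l * tnth y l.

(* Lebesgue measure on R^n: the measure on the Borel sets of R^n giving to
   every closed box prod_l [a_l, b_l] (a_l <= b_l) its volume
   prod_l (b_l - a_l).  Such a measure exists and is unique. *)
Definition is_lebesgue_Rn (R : realType) (n : nat)
    (mu : {measure set (Rn R n) -> \bar R}) : Prop :=
  forall a b : 'I_n -> R, (forall l, a l <= b l) ->
    mu [set x | forall l, a l <= tnth x l <= b l] =
    (\prod_(l < n) (b l - a l))%:E.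

Definition Zc (R : realType) (n : nat) (mu : {measure set (Rn R n) -> \bar R})
    (V : Rn R n -> R) : \bar R :=
  (\int[mu]_x (expR (- V x))%:E)%E.

Definition dens_integrable (R : realType) (n : nat)
    (mu : {measure set (Rn R n) -> \bar R}) (V : Rn R n -> R) (f : Rn R n -> R) : Prop :=
  measurable_fun setT f /\
  mu.-integrable setT (fun x => (f x * expR (- V x) / fine (Zc mu V))%:E).

Definition dens_int (R : realType) (n : nat)
    (mu : {measure set (Rn R n) -> \bar R}) (V : Rn R n -> R) (f : Rn R n -> R) : \bar R :=
  (\int[mu]_x (f x * expR (- V x) / fine (Zc mu V))%:E)%E.

Definition dual_admissible (R : realType) (n k : nat)
    (mu : {measure set (Rn R n) -> \bar R}) (V : 'I_k -> Rn R n -> R)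
    (c : ('I_k -> Rn R n) -> R) (w : 'I_k -> Rn R n -> R) : Prop :=
  (forall i, dens_integrable mu (V i) (w i)) /\
  (forall x : 'I_k -> Rn R n, c x <= \sum_(i < k) w i (x i)).

Definition dual_value (R : realType) (n k : nat)
    (mu : {measure set (Rn R n) -> \bar R}) (V : 'I_k -> Rn R n -> R)
    (w : 'I_k -> Rn R n -> R) : \bar R :=
  (\sum_(i < k) dens_int mu (V i) (w i))%E.

Definition dual_solution (R : realType) (n k : nat)
    (mu : {measure set (Rn R n) -> \bar R}) (V : 'I_k -> Rn R n -> R)
    (c : ('I_k -> Rn R n) -> R) (w : 'I_k -> Rn R n -> R) : Prop :=
  dual_admissible mu V c w /\
  (forall w', dual_admissible mu V c w' ->
     (dual_value mu V w <= dual_value mu V w')%E).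

From HB Require Import structures.
From mathcomp Require Import all_boot all_order all_algebra.
From mathcomp Require Import all_classical all_reals all_analysis.
From mathcomp Require Import measurable_realfun ring.
Set Implicit Arguments. Unset Strict Implicit. Unset Printing Implicit Defensive.
Import Order.TTheory GRing.Theory Num.Theory.
Local Open Scope classical_set_scope.
Local Open Scope ring_scope.

(* Write Z_i = int e^{-V_i}, p_i = e^{-V_i} / Z_i and a_i = int (V_i - U_i) p_i.
   Integrating e^t >= 1 + t at t = V_i - U_i - a_i against p_i gives Gibbs'
   inequality int e^{-U_i} >= Z_i e^{a_i}.  The hypothesis on the V_i says that
   (lam_i V_i)_i is admissible for the dual problem, so the optimality of
   (lam_i U_i)_i yields sum_i lam_i a_i >= 0, whence
   prod_i Z_i^{lam_i} <= prod_i (Z_i e^{a_i})^{lam_i} <= prod_i (int e^{-U_i})^{lam_i}.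
   Evaluating the hypothesis where all but one x_j vanish, so that the cost is 0,
   bounds each V_i from below; this is what makes V_i p_i integrable. *)

Lemma expRN_ge_tangent (R : realType) (a v u : R) :
  expR a * expR (- v) * (1 + (v - u - a)) <= expR (- u).
Proof.
have -> : expR (- u) = expR a * expR (- v) * expR (v - u - a).
  by rewrite -!expRD; congr expR; ring.
by rewrite ler_pM2l ?mulr_gt0 ?expR_gt0 // expR_ge1Dx.
Qed.

Lemma prod_powR_le_tilted (R : realType) (I : finType) (lam t a b : I -> R) :
  (forall i, 0 <= lam i) -> (forall i, 0 <= a i) ->
  (forall i, a i * expR (t i) <= b i) -> 0 <= \sum_i t i * lam i ->
  \prod_i a i `^ lam i <= \prod_i b i `^ lam i.
Proof.
move=> lam_ge0 a_ge0 ab tlam_ge0.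
have tilt : \prod_i (a i * expR (t i)) `^ lam i
    = \prod_i a i `^ lam i * expR (\sum_i t i * lam i).
  rewrite expR_sum -big_split; apply: eq_bigr => i _.
  by rewrite powRM ?expR_ge0 // expRM.
have tilted_le : \prod_i (a i * expR (t i)) `^ lam i <= \prod_i b i `^ lam i.
  apply: ler_prod => i _; rewrite powR_ge0 /=.
  have ae_ge0 : 0 <= a i * expR (t i) by rewrite mulr_ge0 ?expR_ge0.
  by apply: (ge0_ler_powR (lam_ge0 i)) (ab i); rewrite nnegrE // (le_trans ae_ge0 (ab i)).
apply: le_trans tilted_le; rewrite tilt ler_peMr //.
- by apply: prodr_ge0 => i _; exact: powR_ge0.
- by rewrite -expR0 ler_expR.
Qed.

Section gibbs_inequality.
Context d (T : measurableType d) (R : realType) (mu : {measure set T -> \bar R}).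

Definition gibbs_mean (V f : T -> R) : R :=
  \int[mu]_x (f x * expR (- V x) / \int[mu]_y expR (- V y)).

Lemma measurable_expN (V : T -> R) : measurable_fun setT V ->
  measurable_fun setT (fun x => expR (- V x)).
Proof. by move=> mV; apply: measurableT_comp => //; exact: measurableT_comp. Qed.

Lemma integrable_expN (U : T -> R) : measurable_fun setT U ->
  (\int[mu]_x (expR (- U x))%:E < +oo)%E ->
  mu.-integrable setT (fun x => (expR (- U x))%:E).
Proof.
move=> mU U_lty; apply/integrableP; split; first exact/measurable_EFinP/measurable_expN.
by rewrite (eq_integral (fun x => (expR (- U x))%:E)) // => x _; rewrite /= ger0_norm ?expR_ge0.
Qed.

Variables (V U : T -> R).
Hypotheses (mV : measurable_fun setT V) (mU : measurable_fun setT U).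
Hypothesis iexpV : mu.-integrable setT (fun x => (expR (- V x))%:E).
Local Notation Z := (\int[mu]_y expR (- V y)).
Hypothesis Z_gt0 : 0 < Z.

Lemma integrable_density : mu.-integrable setT (fun x => (expR (- V x) / Z)%:E).
Proof. exact: eq_integrable (integrableZr measurableT Z^-1 iexpV). Qed.

Lemma Rintegral_density : \int[mu]_x (expR (- V x) / Z) = 1.
Proof. by rewrite RintegralZr // mulfV // gt_eqF. Qed.

Lemma integrableZ_density (c : R) (f : T -> R) :
  mu.-integrable setT (fun x => (f x * expR (- V x) / Z)%:E) ->
  mu.-integrable setT (fun x => (c * f x * expR (- V x) / Z)%:E).
Proof.
move=> /(integrableZl measurableT c); apply: eq_integrable => // x _.
by rewrite -EFinM !mulrA.
Qed.

Lemma gibbs_meanZ (c : R) (f : T -> R) :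
  mu.-integrable setT (fun x => (f x * expR (- V x) / Z)%:E) ->
  gibbs_mean V (fun x => c * f x) = c * gibbs_mean V f.
Proof.
move=> fi; rewrite /gibbs_mean -RintegralZl //.
by apply: eq_Rintegral => x _; rewrite !mulrA.
Qed.

Hypothesis iUdens : mu.-integrable setT (fun x => (U x * expR (- V x) / Z)%:E).
Variable m : R.
Hypothesis V_ge : forall x, m <= V x.
Hypothesis expU_lty : (\int[mu]_x (expR (- U x))%:E < +oo)%E.

Lemma integrable_V_density :
  mu.-integrable setT (fun x => (V x * expR (- V x) / Z)%:E).
Proof.
have ip := integrable_density.
pose g x := expR (- U x) / Z - expR (- V x) / Z + U x * expR (- V x) / Z
            - m * (expR (- V x) / Z).
have ig : mu.-integrable setT (EFin \o g).
  have ieU := integrableZr measurableT Z^-1 (integrable_expN mU expU_lty).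
  apply: eq_integrable (integrableB measurableT
    (integrableD measurableT (integrableB measurableT ieU ip) iUdens)
    (integrableZl measurableT m ip)) => //.
have iVm : mu.-integrable setT (fun x => ((V x - m) * (expR (- V x) / Z))%:E).
  apply: (le_integrable measurableT _ _ ig) => [|x _].
    apply/measurable_EFinP/measurable_funM; first exact: measurable_funB.
    exact: measurable_funM (measurable_expN mV) (measurable_cst _).
  have Vmp_ge0 : 0 <= (V x - m) * (expR (- V x) / Z).
    by rewrite mulr_ge0 ?subr_ge0 ?divr_ge0 ?expR_ge0 ?(ltW Z_gt0).
  rewrite /= lee_fin ger0_norm //; apply: le_trans (ler_norm _); rewrite -subr_ge0.
  have -> : g x - (V x - m) * (expR (- V x) / Z)
      = (expR (- U x) - expR (- V x) * (1 + (V x - U x))) / Z by rewrite /g; ring.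
  have := expRN_ge_tangent 0 (V x) (U x); rewrite expR0 mul1r subr0.
  by rewrite -subr_ge0 => ?; rewrite divr_ge0 ?(ltW Z_gt0).
apply: eq_integrable (integrableD measurableT iVm (integrableZl measurableT m ip)) => // x _.
by rewrite -EFinM -EFinD; congr EFin; ring.
Qed.

Lemma gibbs_inequality :
  Z * expR (gibbs_mean V V - gibbs_mean V U) <= \int[mu]_x expR (- U x).
Proof.
set a := _ - _.
pose f x := expR (- V x) / Z * (1 - a) + V x * expR (- V x) / Z - U x * expR (- V x) / Z.
have ip := integrable_density.
have ipa := integrableZr measurableT (1 - a) ip.
have iVd := integrable_V_density.
have ipaV := integrableD measurableT ipa iVd.
have i_f : mu.-integrable setT (EFin \o f).
  exact: eq_integrable (integrableB measurableT ipaV iUdens).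
(* [f] integrates to 1 precisely for this choice of [a]. *)
have tangent x : Z * expR a * f x <= expR (- U x).
  have -> : Z * expR a * f x = expR a * expR (- V x) * (1 + (V x - U x - a)).
    by rewrite /f; field; rewrite gt_eqF.
  exact: expRN_ge_tangent.
have := le_Rintegral measurableT (integrableZl measurableT (Z * expR a) i_f)
  (integrable_expN mU expU_lty) (fun x _ => tangent x).
rewrite RintegralZl // /f RintegralB // RintegralD // RintegralZr // Rintegral_density.
rewrite -/(gibbs_mean V V) -/(gibbs_mean V U).
have -> : 1 * (1 - a) + gibbs_mean V V - gibbs_mean V U = 1 by rewrite /a; ring.
by rewrite mulr1.
Qed.

End gibbs_inequality.

Lemma prod_poweR_eq0 (R : realType) (I : finType) (F : I -> \bar R) (r : I -> R) (j : I) :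
  F j = 0%E -> r j != 0 -> (\prod_i poweR (F i) (r i) = 0)%E.
Proof. by move=> Fj0 rj_neq0; rewrite (bigD1 j) //= Fj0 poweR0r // mul0e. Qed.

Lemma prod_poweR_eqy (R : realType) (I : finType) (F : I -> \bar R) (r : I -> R) (j : I) :
  (forall i, (0 < F i)%E) -> F j = +oo%E -> r j != 0 ->
  (\prod_i poweR (F i) (r i) = +oo)%E.
Proof.
move=> F_gt0 Fjy rj_neq0; rewrite (bigD1 j) //= Fjy poweRyr // gt0_mulye //.
by apply: (big_ind (fun x => 0 < x)%E) => // [x y|i _]; [exact: mule_gt0|exact: poweR_gt0].
Qed.

Lemma prod_poweR_fine (R : realType) (I : finType) (F : I -> \bar R) (r : I -> R) :
  (forall i, F i \is a fin_num) ->
  (\prod_i poweR (F i) (r i) = (\prod_i fine (F i) `^ r i)%:E)%E.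
Proof.
by move=> F_fin; rewrite -prodEFin; apply: eq_bigr => i _; rewrite -poweR_EFin fineK.
Qed.

Definition pair_cost (R : realType) (n k : nat) (C : R) (lam : 'I_k -> R)
    (x : 'I_k -> Rn R n) : R :=
  C * \sum_(i < k) \sum_(j < k | (i < j)%N) lam i * lam j * dotp (x i) (x j).

Section pair_cost.
Variables (R : realType) (n k : nat) (C : R) (lam : 'I_k -> R).
Local Notation O := [tuple (0 : R) | _ < n].

Lemma dotp0 (x : Rn R n) : dotp x O = 0.
Proof. by rewrite /dotp big1 // => l _; rewrite tnth_mktuple mulr0. Qed.

Lemma dot0p (x : Rn R n) : dotp O x = 0.
Proof. by rewrite /dotp big1 // => l _; rewrite tnth_mktuple mul0r. Qed.

Lemma pair_cost_single (i : 'I_k) (y : Rn R n) :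
  pair_cost C lam (fun j => if j == i then y else O) = 0.
Proof.
rewrite /pair_cost big1 ?mulr0 // => a _; rewrite big1 // => b.
by case: eqP => [->|_]; case: eqP => [->|_]; rewrite ?ltnn ?dotp0 ?dot0p ?mulr0.
Qed.

Lemma pair_cost_dominated_ge (W : 'I_k -> Rn R n -> R) :
  (forall x, pair_cost C lam x <= \sum_i W i (x i)) ->
  forall i y, - \sum_(j | j != i) W j O <= W i y.
Proof.
move=> cost_le i y; have := cost_le (fun j => if j == i then y else O).
rewrite pair_cost_single (bigD1 i) //= eqxx.
rewrite (eq_bigr (fun j => W j O)) => [|j /negbTE -> //].
by move=> cost_ge0; rewrite -subr_ge0 opprK.
Qed.

End pair_cost.

Lemma dens_intE (R : realType) (n : nat) (mu : {measure set (Rn R n) -> \bar R})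
    (V f : Rn R n -> R) :
  dens_integrable mu V f -> dens_int mu V f = (gibbs_mean mu V f)%:E.
Proof. by case=> _ fi; rewrite /gibbs_mean /Rintegral fineK // integrable_fin_num. Qed.

Lemma dual_solution_le (R : realType) (n k : nat) (mu : {measure set (Rn R n) -> \bar R})
    (V : 'I_k -> Rn R n -> R) (c : ('I_k -> Rn R n) -> R) (w w' : 'I_k -> Rn R n -> R) :
  dual_solution mu V c w -> dual_admissible mu V c w' ->
  \sum_i gibbs_mean mu (V i) (w i) <= \sum_i gibbs_mean mu (V i) (w' i).
Proof.
move=> [[wi _] opt] adm; have := opt w' adm; rewrite /dual_value.
rewrite (eq_bigr _ (fun i _ => dens_intE (wi i))).
by rewrite (eq_bigr _ (fun i _ => dens_intE (adm.1 i))) !sumEFin lee_fin.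
Qed.

Section dual_potentials.
Variables (R : realType) (n k : nat) (mu : {measure set (Rn R n) -> \bar R}).
Variables (C : R) (lam : 'I_k -> R) (V U : 'I_k -> Rn R n -> R).
Hypothesis lam_gt0 : forall i, 0 < lam i.
Hypothesis mV : forall i, measurable_fun setT (V i).
Hypothesis iexpV : forall i, mu.-integrable setT (fun x => (expR (- V i x))%:E).
Hypothesis Z_gt0 : forall i, 0 < \int[mu]_x expR (- V i x).
Hypothesis cost_le : forall x, pair_cost C lam x <= \sum_i lam i * V i (x i).
Hypothesis solU : dual_solution mu V (pair_cost C lam) (fun i x => lam i * U i x).

Lemma potential_ge i y :
  - (\sum_(j | j != i) lam j * V j [tuple 0 | _ < n]) / lam i <= V i y.
Proof.
rewrite ler_pdivrMr // mulrC.
exact: (pair_cost_dominated_ge (W := fun i x => lam i * V i x)).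
Qed.

Lemma measurable_U i : measurable_fun setT (U i).
Proof.
have := measurable_funM (measurable_cst (lam i)^-1) (solU.1.1 i).1.
by apply: eq_measurable_fun => x _; rewrite /= mulKf ?gt_eqF.
Qed.

Lemma integrable_U_density i : mu.-integrable setT
  (fun x => (U i x * expR (- V i x) / \int[mu]_y expR (- V i y))%:E).
Proof.
have := integrableZ_density (lam i)^-1 (solU.1.1 i).2.
by apply: eq_integrable => // x _; rewrite mulKf ?gt_eqF.
Qed.

Lemma gibbs_marginal i :
  ((\int[mu]_x expR (- V i x)
    * expR (gibbs_mean mu (V i) (V i) - gibbs_mean mu (V i) (U i)))%:E
   <= Zc mu (U i))%E.
Proof.
have [U_lty|] := ltP (Zc mu (U i)) +oo%E; last by rewrite leye_eq => /eqP ->; exact: leey.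
have ZU_fin := integrable_fin_num measurableT (integrable_expN (measurable_U i) U_lty).
have := gibbs_inequality (mV i) (measurable_U i) (iexpV i) (Z_gt0 i)
  (integrable_U_density i) (potential_ge i) U_lty.
by rewrite /Zc -(fineK ZU_fin) lee_fin.
Qed.

Lemma Zc_U_gt0 i : (0 < Zc mu (U i))%E.
Proof. by apply: lt_le_trans (gibbs_marginal i); rewrite lte_fin mulr_gt0 ?expR_gt0. Qed.

Lemma optimality_gap_ge0 : (forall i, (Zc mu (U i) < +oo)%E) ->
  0 <= \sum_i (gibbs_mean mu (V i) (V i) - gibbs_mean mu (V i) (U i)) * lam i.
Proof.
move=> U_lty.
have iVd i := integrable_V_density (mV i) (measurable_U i) (iexpV i) (Z_gt0 i)
  (integrable_U_density i) (potential_ge i) (U_lty i).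
have admV : dual_admissible mu V (pair_cost C lam) (fun i x => lam i * V i x).
  split=> // i; split; first exact: measurable_funM (measurable_cst _) (mV i).
  exact: integrableZ_density (iVd i).
have := dual_solution_le solU admV.
rewrite (eq_bigr _ (fun i _ => gibbs_meanZ _ (integrable_U_density i))).
rewrite (eq_bigr _ (fun i _ => gibbs_meanZ _ (iVd i))) -subr_ge0 -sumrB.
by under eq_bigr do rewrite -mulrBr mulrC.
Qed.

End dual_potentials.

Theorem mainTheorem15 (R : realType) (n k : nat)
    (mu : {measure set (Rn R n) -> \bar R}) (Hmu : is_lebesgue_Rn mu)
    (C : R) (lam : 'I_k -> R) (V U : 'I_k -> Rn R n -> R) :
  (2 <= k)%N -> 0 < C ->
  (forall i, 0 < lam i < 1) -> \sum_(i < k) lam i = 1 ->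
  (forall i, measurable_fun setT (V i)) ->
  (forall i, mu.-integrable setT (fun x => (expR (- V i x))%:E)) ->
  (forall x : 'I_k -> Rn R n,
     C * \sum_(i < k) \sum_(j < k | (i < j)%N) lam i * lam j * dotp (x i) (x j)
     <= \sum_(i < k) lam i * V i (x i)) ->
  dual_solution mu V
    (fun x => C * \sum_(i < k) \sum_(j < k | (i < j)%N) lam i * lam j * dotp (x i) (x j))
    (fun i x => lam i * U i x) ->
  (\prod_(i < k) poweR (Zc mu (V i)) (lam i)
   <= \prod_(i < k) poweR (Zc mu (U i)) (lam i))%E.
Proof.
move=> _ _ lam01 _ mV iexpV cost_le solU.
have lam_gt0 i : 0 < lam i by case/andP: (lam01 i).
have [[j Zj0]|Z_neq0] := pselect (exists j, Zc mu (V j) = 0%E).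
  rewrite (prod_poweR_eq0 Zj0) ?gt_eqF //.
  by apply: prode_ge0 => i _; exact: poweR_ge0.
have Z_fin i : Zc mu (V i) \is a fin_num := integrable_fin_num measurableT (iexpV i).
have Z_gt0 i : 0 < \int[mu]_x expR (- V i x).
  apply: fine_gt0; rewrite -ge0_fin_numE ?Z_fin ?andbT; last exact: integral_ge0.
  rewrite lt0e integral_ge0 // andbT; apply/eqP => Zi0; by apply: Z_neq0; exists i.
have ZU_gt0 := Zc_U_gt0 lam_gt0 mV iexpV Z_gt0 cost_le solU.
have [[j ZUj]|ZU_neqy] := pselect (exists j, Zc mu (U j) = +oo%E).
  by rewrite (prod_poweR_eqy ZU_gt0 ZUj) ?gt_eqF ?leey.
have ZU_lty i : (Zc mu (U i) < +oo)%E.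
  by rewrite ltey; apply/eqP => ZUi; apply: ZU_neqy; exists i.
have ZU_fin i : Zc mu (U i) \is a fin_num by rewrite ge0_fin_numE ?ZU_lty ?ltW.
rewrite (prod_poweR_fine _ Z_fin) (prod_poweR_fine _ ZU_fin) lee_fin.
apply: (prod_powR_le_tilted (t := fun i => gibbs_mean mu (V i) (V i) - gibbs_mean mu (V i) (U i))).
- by move=> i; exact: ltW (lam_gt0 i).
- by move=> i; exact: ltW (Z_gt0 i).
- move=> i; rewrite -lee_fin (fineK (ZU_fin i)).
  exact: gibbs_marginal lam_gt0 mV iexpV Z_gt0 cost_le solU i.
- exact: optimality_gap_ge0 lam_gt0 mV iexpV Z_gt0 cost_le solU ZU_lty.
Qed.
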